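(* Let $(\mathsf{X},\mu)$, $(\mathsf{Y},\nu)$ be Polish probability spaces and $c:\mathsf{X}\times\mathsf{Y}\to[0,\infty)$ measurable, and for each $\varepsilon>0$ let $\pi_\varepsilon$ be the $(c,\varepsilon)$-cyclically invariant coupling (assumed to exist for every $\varepsilon>0$). Let $k\ge2$ and $0\le\delta\le\delta'\le\infty$. Define $$A_k(\delta,\delta'):=\Big\{(x_i,y_i)_{i=1}^k\in(\mathsf{X}\times\mathsf{Y})^k:\ \delta\le\sum_{i=1}^k c(x_i,y_i)-\sum_{i=1}^k c(x_i,y_{i+1})\le\delta'\Big\},$$ with $y_{k+1}:=y_1$, and let $A\subset A_k(\delta,\delta')$ be Borel. Then $\pi_\varepsilon^k:=\prod_{i=1}^k\pi_\varepsilon(dx_i,dy_i)$ (the $k$-fold product measure on $(\mathsf{X}\times\mathsf{Y})^k$) satisfies $$\pi_\varepsilon^k(A)\le e^{-\delta/\varepsilon}\quad\text{for all }\varepsilon>0.$$ Suppose in addition that $\bar A:=\{(x_i,y_{i+1})_{i=1}^k:\ (x_i,y_i)_{i=1}^k\in A\}$ satisfies $\liminf_{\varepsilon\to0}\varepsilon\log\pi_\varepsilon^k(\bar A)=0$. Then $$\liminf_{\varepsilon\to0}\varepsilon\log\pi_\varepsilon^k(A)\ge-\delta'.$$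
   Context: $\Pi(\mu,\nu)$ is the set of couplings of $\mu,\nu$ and $P:=\mu\otimes\nu$. A coupling $\pi\in\Pi(\mu,\nu)$ is $(c,\varepsilon)$-cyclically invariant if $\pi\sim P$ and its density admits a version $\frac{d\pi}{dP}:\mathsf{X}\times\mathsf{Y}\to(0,\infty)$ such that $\prod_{i=1}^k\frac{d\pi}{dP}(x_i,y_i)=\exp\big(-\frac1\varepsilon[\sum_{i=1}^k c(x_i,y_i)-\sum_{i=1}^k c(x_i,y_{i+1})]\big)\prod_{i=1}^k\frac{d\pi}{dP}(x_i,y_{i+1})$ for all $k\in\mathbb{N}$ and $(x_i,y_i)_{i=1}^k\subset\mathsf{X}\times\mathsf{Y}$, with $y_{k+1}:=y_1$. There is at most one such coupling for each $\varepsilon$. *)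

From HB Require Import structures.
From mathcomp Require Import all_boot all_order all_algebra.
From mathcomp Require Import all_classical all_reals all_analysis.

Set Implicit Arguments.
Unset Strict Implicit.
Unset Printing Implicit Defensive.

Import Order.TTheory GRing.Theory Num.Theory.
Import numFieldNormedType.Exports.

Local Open Scope classical_set_scope.
Local Open Scope ring_scope.

Definition polish_space (R : realType) (T : topologicalType) : Prop :=
  (exists D : set T, countable D /\ closure D = setT) /\
  (exists dist : T -> T -> R,
     [/\ (forall x y, 0 <= dist x y) /\
         (forall x y, dist x y = 0 <-> x = y),
         (forall x y, dist x y = dist y x),
         (forall x y z, dist x z <= dist x y + dist y z),
         (forall U : set T, open U <->
            (forall x, U x -> exists2 e : R, 0 < e & [set y | dist x y < e] `<=` U)) &
         (forall u : nat -> T,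
            (forall e : R, 0 < e -> exists N, forall m n, (N <= m)%N -> (N <= n)%N ->
                 dist (u m) (u n) < e) ->
            exists l : T, (fun n => dist (u n) l) @ \oo --> (0 : R))]).

Notation borel_type T := (g_sigma_algebraType (@open T)).

(* k-fold product measure of a measure on Z, on k.-tuple Z, built as  *)
(* an iterated integral (as the library builds the binary product     *)
(* measure m1 \x m2 := fun A => \int[m1]_x m2 (xsection A x)).        *)
Fixpoint prod_k (d : measure_display) (Z : measurableType d) (R : realType)
    (m : set Z -> \bar R) (n : nat) : set (n.-tuple Z) -> \bar R :=
  match n return set (n.-tuple Z) -> \bar R with
  | 0 => fun A => (\1_A [tuple] : R)%:E
  | n'.+1 => fun A =>
      (\int[m]_z prod_k m (fun t : n'.-tuple Z => A (cons_tuple z t)))%E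
  end.

Section Coupling.
Context (R : realType) (dX dY : measure_display)
        (X : measurableType dX) (Y : measurableType dY).

Definition is_coupling (mu : probability X R) (nu : probability Y R)
    (pi : probability (X * Y)%type R) : Prop :=
  (forall A : set X, measurable A -> pi (A `*` setT) = mu A) /\
  (forall B : set Y, measurable B -> pi (setT `*` B) = nu B).

Definition cyc_gap (c : X * Y -> R) (k : nat) (t : k.-tuple (X * Y)) : R :=
  \sum_(i < k) c (tnth t i) - \sum_(i < k) c ((tnth t i).1, (tnth t (ordS i)).2).

Definition cyc_shift (k : nat) (t : k.-tuple (X * Y)) : k.-tuple (X * Y) :=
  [tuple ((tnth t i).1, (tnth t (ordS i)).2) | i < k].

Definition cyc_invariant (mu : probability X R) (nu : probability Y R)
    (c : X * Y -> R) (eps : R) (pi : probability (X * Y)%type R) : Prop :=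
  is_coupling mu nu pi /\
  exists f : X * Y -> R,
    [/\ measurable_fun setT f,
        (forall z, 0 < f z),
        (forall B : set (X * Y), measurable B ->
           pi B = (\int[(mu \x nu)%E]_(z in B) (f z)%:E)%E) &
        (forall (k : nat) (t : k.-tuple (X * Y)),
           \prod_(i < k) f (tnth t i) =
           expR (- (cyc_gap c t / eps)) *
           \prod_(i < k) f ((tnth t i).1, (tnth t (ordS i)).2))].

End Coupling.

Arguments cyc_shift {dX dY X Y k}.

From HB Require Import structures.
From mathcomp Require Import all_boot all_order all_algebra.
From mathcomp Require Import all_classical all_reals all_analysis.
From mathcomp Require Import measurable_realfun.

Import Order.TTheory GRing.Theory Num.Theory.
Import numFieldNormedType.Exports.

Local Open Scope classical_set_scope.
Local Open Scope ring_scope.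

(* Write P := mu \x nu, F t := prod_i f (x_i, y_i) for the density f of pi_eps, and
   s for the cyclic shift (x_i, y_i)_i |-> (x_i, y_(i+1))_i.  Then pi_eps^k has density F
   with respect to P^k, and the cyclic identity reads F t = exp (- gap t / eps) F (s t).
   Since s only permutes the y-coordinates, P^k is s-invariant.  Hence, on A,
     pi_eps^k (A) = int_A F dP^k <= exp (- delta / eps) int F o s dP^k
                  = exp (- delta / eps),
     pi_eps^k (A) >= exp (- delta' / eps) int 1_A (F o s) dP^k
                  = exp (- delta' / eps) pi_eps^k (s A),
   and the liminf bound follows by taking eps * ln.  Since prod_k is an iterated
   integral, the argument is run with iterated integrals of nonnegative functions, and
   the s-invariance of P^k is an instance of Fubini-Tonelli. *)

Lemma measurable_mktuple d d' (T : measurableType d) (Z : measurableType d') n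
    (g : 'I_n -> T -> Z) :
  (forall i, measurable_fun setT (g i)) ->
  measurable_fun setT (fun x => [tuple g i x | i < n]).
Proof.
move=> mg; apply/measurable_fun_tnthP => i.
by rewrite (_ : _ \o _ = g i) //; apply: funext => x /=; rewrite tnth_mktuple.
Qed.

Section iter_integral.
Context {R : realType} {d : measure_display} {Z : measurableType d}.
Local Open Scope ereal_scope.

Fixpoint iter_integral (m : set Z -> \bar R) n :
    (n.-tuple Z -> \bar R) -> \bar R :=
  match n return (n.-tuple Z -> \bar R) -> \bar R with
  | 0 => fun h => h [tuple]
  | n'.+1 => fun h => \int[m]_z iter_integral m n' (fun t => h (cons_tuple z t))
  end.

Lemma prod_k_iter_integral (m : {measure set Z -> \bar R}) n (A : set (n.-tuple Z)) :
  prod_k m A = iter_integral m n (fun t => (\1_A t)%:E).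
Proof.
elim: n A => [|n IH] A //=.
by apply: eq_integral => z _; rewrite IH.
Qed.

Lemma measurable_cons_tuple dT (T : measurableType dT) n
    (f : T -> Z) (g : T -> n.-tuple Z) (h : n.+1.-tuple Z -> \bar R) :
  measurable_fun setT f -> measurable_fun setT g -> measurable_fun setT h ->
  measurable_fun setT (fun x => h (cons_tuple (f x) (g x))).
Proof. by move=> mf mg mh; apply: (measurableT_comp mh); exact: measurable_cons. Qed.

Lemma measurable_cons_tuple1 n (z : Z) (h : n.+1.-tuple Z -> \bar R) :
  measurable_fun setT h -> measurable_fun setT (fun t => h (cons_tuple z t)).
Proof. exact: measurable_cons_tuple. Qed.

Variable m : {sigma_finite_measure set Z -> \bar R}.

Lemma iter_integral_ge0 n (h : n.-tuple Z -> \bar R) :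
  (forall t, 0 <= h t) -> 0 <= iter_integral m n h.
Proof.
elim: n h => [|n IH] h h0 /=; first exact: h0.
by apply: integral_ge0 => z _; exact: IH.
Qed.

Lemma prod_k_ge0 n (A : set (n.-tuple Z)) : 0 <= prod_k m A.
Proof. by rewrite prod_k_iter_integral; apply: iter_integral_ge0 => t; rewrite lee_fin. Qed.

Lemma measurable_iter_integral {n dT} {T : measurableType dT}
    (G : T * n.-tuple Z -> \bar R) :
  measurable_fun setT G -> (forall p, 0 <= G p) ->
  measurable_fun setT (fun x => iter_integral m n (fun t => G (x, t))).
Proof.
elim: n dT T G => [|n IH] dT T G mG G0 /=.
  by apply: (measurableT_comp mG); exact: measurable_fun_pair.
pose H (q : T * Z) := iter_integral m n (fun t => G (q.1, cons_tuple q.2 t)).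
have mH : measurable_fun setT H.
  apply: (IH _ _ (fun q => G (q.1.1, cons_tuple q.1.2 q.2))); last by move=> q; exact: G0.
  apply: (measurableT_comp mG); apply: measurable_fun_pair => /=.
    exact: measurableT_comp measurable_fst measurable_fst.
  apply: measurable_cons => //.
  exact: measurableT_comp measurable_snd measurable_fst.
apply: (@measurable_fun_fubini_tonelli_F _ _ _ _ _ m H mH) => q.
exact: iter_integral_ge0.
Qed.

Lemma measurable_iter_integral_cons n (h : n.+1.-tuple Z -> \bar R) :
  measurable_fun setT h -> (forall t, 0 <= h t) ->
  measurable_fun setT (fun z => iter_integral m n (fun t => h (cons_tuple z t))).
Proof.
move=> mh h0.
apply: (measurable_iter_integral (fun p => h (cons_tuple p.1 p.2))) => //.
exact: measurable_cons_tuple.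
Qed.

Lemma le_iter_integral n (h1 h2 : n.-tuple Z -> \bar R) :
  measurable_fun setT h1 -> measurable_fun setT h2 ->
  (forall t, 0 <= h1 t) -> (forall t, h1 t <= h2 t) ->
  iter_integral m n h1 <= iter_integral m n h2.
Proof.
elim: n h1 h2 => [|n IH] h1 h2 m1 m2 h10 h12 /=; first exact: h12.
have h20 t : 0 <= h2 t by exact: le_trans (h10 t) (h12 t).
apply: ge0_le_integral => //.
- by move=> z _; exact: iter_integral_ge0.
- exact: measurable_iter_integral_cons.
- exact: measurable_iter_integral_cons.
- by move=> z _; apply: IH => //; exact: measurable_cons_tuple1.
Qed.

Lemma iter_integralZl n (h : n.-tuple Z -> \bar R) (a : R) :
  measurable_fun setT h -> (forall t, 0 <= h t) -> (0 <= a)%R ->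
  iter_integral m n (fun t => a%:E * h t) = a%:E * iter_integral m n h.
Proof.
elim: n h => [|n IH] h mh h0 a0 //=.
transitivity (\int[m]_z (a%:E * iter_integral m n (fun t => h (cons_tuple z t)))).
  by apply: eq_integral => z _; rewrite IH //; exact: measurable_cons_tuple1.
apply: ge0_integralZl_EFin => //; last exact: measurable_iter_integral_cons.
by move=> z _; exact: iter_integral_ge0.
Qed.

Lemma iter_integral_fubini {dY} {Y : measurableType dY}
    (l : {sigma_finite_measure set Y -> \bar R}) {n} (G : Y * n.-tuple Z -> \bar R) :
  measurable_fun setT G -> (forall p, 0 <= G p) ->
  \int[l]_y iter_integral m n (fun t => G (y, t)) =
  iter_integral m n (fun t => \int[l]_y G (y, t)).
Proof.
elim: n G => [|n IH] G mG G0 //=.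
pose H (q : Y * Z) := iter_integral m n (fun t => G (q.1, cons_tuple q.2 t)).
have mH : measurable_fun setT H.
  apply: (measurable_iter_integral (fun q => G (q.1.1, cons_tuple q.1.2 q.2))) => //.
  apply: (measurableT_comp mG); apply: measurable_fun_pair => /=.
    exact: measurableT_comp measurable_fst measurable_fst.
  apply: measurable_cons => //.
  exact: measurableT_comp measurable_snd measurable_fst.
rewrite (@fubini_tonelli _ _ _ _ _ l m H mH) //=; last first.
  by move=> q; exact: iter_integral_ge0.
apply: eq_integral => z _; rewrite (IH (fun p => G (p.1, cons_tuple z p.2))) //.
apply: (measurableT_comp mG); apply: measurable_fun_pair => //=.
exact: measurable_cons.
Qed.

End iter_integral.

Lemma tnth_rot1 T n (t : n.-tuple T) (i : 'I_n) :
  tnth [tuple of rot 1 t] i = tnth t (ordS i).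
Proof.
case: n t i => [|n] t i; first by case: i.
case/tupleP: t => x s in i *.
rewrite !(tnth_nth x) /= rot1_cons nth_rcons size_tuple.
have [lt_in|ge_in] := ltnP i n; first by rewrite modn_small.
have -> : val i = n by apply/eqP; rewrite eqn_leq ge_in -ltnS ltn_ord.
by rewrite eqxx modnn.
Qed.

Lemma tnth_zip T U n (t : n.-tuple T) (u : n.-tuple U) (i : 'I_n) :
  tnth [tuple of zip t u] i = (tnth t i, tnth u i).
Proof.
case: n t u i => [|n] t u i; first by case: i.
by rewrite !(tnth_nth (tnth t i, tnth u i)) /= nth_zip ?size_tuple // -!tnth_nth.
Qed.

Section rotation_invariance.
Context {R : realType} {d : measure_display} {Y : measurableType d}.
Variable nu : {sigma_finite_measure set Y -> \bar R}.
Local Open Scope ereal_scope.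

Lemma measurable_rot1 n : measurable_fun setT (fun t : n.-tuple Y => [tuple of rot 1 t]).
Proof.
apply/measurable_fun_tnthP => i.
rewrite (_ : _ \o _ = fun t => tnth t (ordS i)); first exact: measurable_tnth.
by apply: funext => t /=; rewrite tnth_rot1.
Qed.

Let iter_integral_rot1_cons n (g : n.+1.-tuple Y -> \bar R) :
  measurable_fun setT g ->
  iter_integral nu n (fun s => \int[nu]_y g [tuple of rot 1 (cons_tuple y s)]) =
  \int[nu]_y iter_integral nu n (fun s => g (cons_tuple y s)).
Proof.
elim: n g => [|n IH] g mg /=.
  by apply: eq_integral => y _; congr g; apply: val_inj.
apply: eq_integral => y' _.
have rot_cons y s : [tuple of rot 1 (cons_tuple y (cons_tuple y' s))] =
    cons_tuple y' [tuple of rot 1 (cons_tuple y s)].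
  by apply: val_inj; rewrite /= !rot1_cons.
under eq_fun do under eq_integral do rewrite rot_cons.
by rewrite (IH (fun u => g (cons_tuple y' u))) //; exact: measurable_cons_tuple1.
Qed.

Lemma iter_integral_rot1 n (g : n.-tuple Y -> \bar R) :
  measurable_fun setT g -> (forall t, 0 <= g t) ->
  iter_integral nu n (fun t => g [tuple of rot 1 t]) = iter_integral nu n g.
Proof.
case: n g => [|n] g mg g0 /=; first by congr g; apply: val_inj.
(* [rot 1] moves the first coordinate to the end; Fubini moves its integral back
   to the front. *)
rewrite (iter_integral_fubini nu nu (fun p => g [tuple of rot 1 (cons_tuple p.1 p.2)])) //.
  exact: iter_integral_rot1_cons.
apply: (measurableT_comp mg); apply: (measurableT_comp (measurable_rot1 _)).
exact: measurable_cons.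
Qed.

End rotation_invariance.

Section shift_invariance.
Context {R : realType} {dX dY : measure_display}.
Context {X : measurableType dX} {Y : measurableType dY}.
Variables (mu : probability X R) (nu : probability Y R).
Local Open Scope ereal_scope.

Let P : probability (X * Y)%type R := mu \x nu.

Lemma measurable_zip n :
  measurable_fun setT (fun p : n.-tuple X * n.-tuple Y => [tuple of zip p.1 p.2]).
Proof.
apply/measurable_fun_tnthP => i.
rewrite (_ : _ \o _ = fun p => (tnth p.1 i, tnth p.2 i)).
  by apply: measurable_fun_pair; apply: measurableT_comp (measurable_tnth i) _.
by apply: funext => p /=; rewrite tnth_zip.
Qed.

Lemma measurable_cyc_shift n : measurable_fun setT (@cyc_shift _ _ X Y n).
Proof.
apply: measurable_mktuple => i; apply: measurable_fun_pair.
  exact: measurableT_comp measurable_fst (measurable_tnth i).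
exact: measurableT_comp measurable_snd (measurable_tnth _).
Qed.

Definition cyc_unshift n (t : n.-tuple (X * Y)) : n.-tuple (X * Y) :=
  [tuple ((tnth t i).1, (tnth t (ord_pred i)).2) | i < n].

Lemma cyc_shiftK n : cancel (@cyc_shift _ _ X Y n) (@cyc_unshift n).
Proof.
by move=> t; apply: eq_from_tnth => i; rewrite !tnth_mktuple ord_predK; case: (tnth t i).
Qed.

Lemma cyc_unshiftK n : cancel (@cyc_unshift n) (@cyc_shift _ _ X Y n).
Proof.
by move=> t; apply: eq_from_tnth => i; rewrite !tnth_mktuple ordSK; case: (tnth t i).
Qed.

Lemma measurable_cyc_unshift n : measurable_fun setT (cyc_unshift n).
Proof.
apply: measurable_mktuple => i; apply: measurable_fun_pair.
  exact: measurableT_comp measurable_fst (measurable_tnth i).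
exact: measurableT_comp measurable_snd (measurable_tnth _).
Qed.

Lemma measurable_image_cyc_shift {n} {A : set (n.-tuple (X * Y))} :
  measurable A -> measurable (cyc_shift @` A).
Proof.
move=> mA; have -> : cyc_shift @` A = cyc_unshift n @^-1` A.
  apply/seteqP; split => [_ [t At <-]|t At]; first by rewrite /preimage /= cyc_shiftK.
  by exists (cyc_unshift n t); rewrite ?cyc_unshiftK.
by rewrite -[_ @^-1` _]setTI; exact: measurable_cyc_unshift.
Qed.

Lemma cyc_shift_zip n (xs : n.-tuple X) (ys : n.-tuple Y) :
  cyc_shift [tuple of zip xs ys] = [tuple of zip xs [tuple of rot 1 ys]].
Proof. by apply: eq_from_tnth => i; rewrite tnth_mktuple !tnth_zip tnth_rot1. Qed.

Lemma iter_integral_zip n (h : n.-tuple (X * Y) -> \bar R) :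
  measurable_fun setT h -> (forall t, 0 <= h t) ->
  iter_integral P n h =
  iter_integral mu n (fun xs => iter_integral nu n (fun ys => h [tuple of zip xs ys])).
Proof.
elim: n h => [|n IH] h mh h0 /=; first by congr h; apply: val_inj.
rewrite /P (@fubini_tonelli1 _ _ _ _ _ mu nu
  (fun z => iter_integral P n (fun t => h (cons_tuple z t)))) //; last 2 first.
- exact: measurable_iter_integral_cons.
- by move=> z; exact: iter_integral_ge0.
apply: eq_integral => x _; rewrite /fubini_F.
pose G (p : Y * n.-tuple X) :=
  iter_integral nu n (fun ys => h (cons_tuple (x, p.1) [tuple of zip p.2 ys])).
transitivity (\int[nu]_y iter_integral mu n (fun xs => G (y, xs))).
  by apply: eq_integral => y _; rewrite IH //; exact: measurable_cons_tuple1.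
rewrite (iter_integral_fubini mu nu G) //.
- by congr iter_integral; apply: funext => xs; apply: eq_integral => y _;
    congr iter_integral; apply: funext => ys; congr h; apply: val_inj.
- apply: (measurable_iter_integral nu
    (fun q : Y * n.-tuple X * n.-tuple Y =>
       h (cons_tuple (x, q.1.1) [tuple of zip q.1.2 q.2]))) => //.
  apply: measurable_cons_tuple => //.
    apply: measurable_fun_pair => //.
    exact: measurableT_comp measurable_fst measurable_fst.
  exact: measurableT_comp (measurable_zip n)
    (measurable_fun_pair (measurableT_comp measurable_snd measurable_fst) measurable_snd).
- by move=> p; exact: iter_integral_ge0.
Qed.

Lemma iter_integral_cyc_shift n (h : n.-tuple (X * Y) -> \bar R) :
  measurable_fun setT h -> (forall t, 0 <= h t) ->
  iter_integral P n (fun t => h (cyc_shift t)) = iter_integral P n h.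
Proof.
move=> mh h0; have mhs := measurableT_comp mh (measurable_cyc_shift n).
rewrite !iter_integral_zip //; congr iter_integral; apply: funext => xs.
under eq_fun do rewrite cyc_shift_zip.
rewrite (iter_integral_rot1 nu _ (fun ys => h [tuple of zip xs ys])) //.
exact: measurableT_comp mh (measurableT_comp (measurable_zip n) (pair1_measurable xs)).
Qed.

End shift_invariance.

Section density.
Context {R : realType} {d : measure_display} {Z : measurableType d}.
Variable P : {sigma_finite_measure set Z -> \bar R}.
Variable pi : {finite_measure set Z -> \bar R}.
Variable f : Z -> R.
Hypotheses (mf : measurable_fun setT f) (f_ge0 : forall z, 0 <= f z).
Hypothesis pi_density : forall B, measurable B -> pi B = (\int[P]_(z in B) (f z)%:E)%E.
Local Open Scope ereal_scope.

Let pi_dominated : pi `<< P.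
Proof.
move=> N PN A mA AN; rewrite pi_density // null_set_integral //; last exact: PN.
exact/measurable_EFinP/measurable_funTS.
Qed.

Let Radon_Nikodym_density :
  ae_eq P setT (Radon_Nikodym_SigmaFinite.f pi P) (EFin \o f).
Proof.
apply: integral_ae_eq => //.
- exact: Radon_Nikodym_SigmaFinite.f_integrable.
- exact/measurable_EFinP.
- by move=> E _ mE; rewrite -Radon_Nikodym_SigmaFinite.f_integral // pi_density.
Qed.

Lemma integral_density (g : Z -> \bar R) :
  measurable_fun setT g -> (forall z, 0 <= g z) ->
  \int[pi]_z g z = \int[P]_z (g z * (f z)%:E).
Proof.
move=> mg g0.
(* [f] is a version of the Radon-Nikodym derivative of [pi] with respect to [P]. *)
rewrite -(Radon_Nikodym_SigmaFinite.change_of_variables pi_dominated) //.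
apply: ae_eq_integral => //.
- apply: emeasurable_funM => //; apply: measurable_int.
  exact: Radon_Nikodym_SigmaFinite.f_integrable.
- exact/emeasurable_funM/measurable_EFinP.
- exact: ae_eqe_mul2l.
Qed.

Definition prod_tnth {n} (t : n.-tuple Z) : R := (\prod_(i < n) f (tnth t i))%R.

Lemma prod_tnth_cons n z (t : n.-tuple Z) :
  prod_tnth (cons_tuple z t) = (f z * prod_tnth t)%R.
Proof.
rewrite /prod_tnth big_ord_recl; congr (_ * _)%R.
by apply: eq_bigr => i _; rewrite tnthS.
Qed.

Lemma prod_tnth_ge0 n (t : n.-tuple Z) : (0 <= prod_tnth t)%R.
Proof. by apply: prodr_ge0 => i _; exact: f_ge0. Qed.

Lemma measurable_prod_tnth n : measurable_fun setT (@prod_tnth n).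
Proof.
apply: measurable_prod => i _.
exact: measurableT_comp mf (measurable_tnth i).
Qed.

Lemma iter_integral_density n (h : n.-tuple Z -> \bar R) :
  measurable_fun setT h -> (forall t, 0 <= h t) ->
  iter_integral pi n h = iter_integral P n (fun t => h t * (prod_tnth t)%:E).
Proof.
elim: n h => [|n IH] h mh h0 /=; first by rewrite /prod_tnth big_ord0 mule1.
pose G (p : Z * n.-tuple Z) := h (cons_tuple p.1 p.2) * (prod_tnth p.2)%:E.
have mG : measurable_fun setT G.
  apply: emeasurable_funM; first exact: measurable_cons_tuple.
  exact/measurable_EFinP/(measurableT_comp (measurable_prod_tnth n)).
have G0 p : 0 <= G p by rewrite mule_ge0 // lee_fin prod_tnth_ge0.
transitivity (\int[pi]_z iter_integral P n (fun t => G (z, t))).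
  by apply: eq_integral => z _; rewrite IH //; exact: measurable_cons_tuple1.
rewrite integral_density; last 2 first.
- exact: measurable_iter_integral.
- by move=> z; exact: iter_integral_ge0.
apply: eq_integral => z _.
rewrite muleC -iter_integralZl //; last exact: measurableT_comp mG (pair1_measurable z).
by congr iter_integral; apply: funext => t; rewrite prod_tnth_cons EFinM muleCA.
Qed.

End density.

Lemma iter_integral_cst1 {R : realType} {d} {Z : measurableType d}
    (m : probability Z R) n :
  iter_integral m n (fun=> 1%E) = 1%E.
Proof.
elim: n => [//|n IH] /=; under eq_integral do rewrite IH.
by rewrite integral_cst // mul1e; exact: probability_setT.
Qed.

Section cyclic_density.
Context {R : realType} {dX dY : measure_display}.
Context {X : measurableType dX} {Y : measurableType dY}.
Context {mu : probability X R} {nu : probability Y R} {c : X * Y -> R} {eps : R}.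
Context {coupling : probability (X * Y)%type R} {f : X * Y -> R}.
Hypotheses (mf : measurable_fun setT f) (f_ge0 : forall z, 0 <= f z).
Hypothesis coupling_density :
  forall B, measurable B -> coupling B = (\int[(mu \x nu)%E]_(z in B) (f z)%:E)%E.
Hypothesis f_cyclic : forall (k : nat) (t : k.-tuple (X * Y)),
  \prod_(i < k) f (tnth t i) =
  expR (- (cyc_gap c t / eps)) * \prod_(i < k) f ((tnth t i).1, (tnth t (ordS i)).2).
Local Open Scope ereal_scope.

Let P : probability (X * Y)%type R := mu \x nu.

Lemma prod_tnth_cyc_shift n (t : n.-tuple (X * Y)) :
  prod_tnth f t = (expR (- (cyc_gap c t / eps)) * prod_tnth f (cyc_shift t))%R.
Proof.
rewrite /prod_tnth f_cyclic; congr (_ * _)%R.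
by apply: eq_bigr => i _; rewrite tnth_mktuple.
Qed.

Let density_ge0 {n} (t : n.-tuple (X * Y)) : 0 <= (prod_tnth f t)%:E.
Proof. by rewrite lee_fin; exact: prod_tnth_ge0. Qed.

Let measurable_density n :
  measurable_fun setT (fun t : n.-tuple (X * Y) => (prod_tnth f t)%:E).
Proof. by apply/measurable_EFinP; exact: measurable_prod_tnth. Qed.

Let measurable_indicator {n} {A : set (n.-tuple (X * Y))} :
  measurable A -> measurable_fun setT (fun t => (\1_A t : R)%:E).
Proof. by move=> mA; apply/measurable_EFinP; exact: measurable_indic. Qed.

Let indicator_ge0 {n} (A : set (n.-tuple (X * Y))) t : 0 <= (\1_A t : R)%:E.
Proof. by rewrite lee_fin indicE. Qed.

Let iter_integral_coupling := iter_integral_density P coupling f mf f_ge0 coupling_density.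

Lemma prod_k_le_cyc_gap n (A : set (n.-tuple (X * Y))) (b : R) :
  measurable A -> (0 <= b)%R ->
  (forall t, A t -> (expR (- (cyc_gap c t / eps)) <= b)%R) ->
  prod_k coupling A <= b%:E.
Proof.
move=> mA b0 hb.
have mFs := measurableT_comp (measurable_density n) (measurable_cyc_shift n).
have mIA := measurable_indicator mA; have mF := measurable_density n.
rewrite prod_k_iter_integral (iter_integral_coupling _ _ mIA (indicator_ge0 A)).
apply: le_trans (le_iter_integral P n _
  (fun t => b%:E * (prod_tnth f (cyc_shift t))%:E) _ _ _ _) _.
- exact: emeasurable_funM.
- exact: emeasurable_funM.
- by move=> t; rewrite mule_ge0 ?density_ge0 ?indicator_ge0.
- move=> t; rewrite indicE; have [/set_mem At|_] := boolP (t \in A); last first.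
    by rewrite mul0e mule_ge0 ?density_ge0.
  rewrite mul1e (prod_tnth_cyc_shift _ t) EFinM lee_wpmul2r ?density_ge0 //.
  by rewrite lee_fin hb.
rewrite iter_integralZl //.
rewrite (iter_integral_cyc_shift mu nu _ (fun t => (prod_tnth f t)%:E)) //.
have := iter_integral_coupling n (fun=> 1) (measurable_cst _) (fun=> lee01).
by rewrite iter_integral_cst1; under eq_fun do rewrite mul1e; move=> <-; rewrite mule1.
Qed.

Lemma prod_k_cyc_shift_le n (A : set (n.-tuple (X * Y))) (b : R) :
  measurable A -> (0 <= b)%R ->
  (forall t, A t -> (b <= expR (- (cyc_gap c t / eps)))%R) ->
  b%:E * prod_k coupling (cyc_shift @` A) <= prod_k coupling A.
Proof.
move=> mA b0 hb; have mAs := measurable_image_cyc_shift mA.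
have mFs := measurableT_comp (measurable_density n) (measurable_cyc_shift n).
have mIA := measurable_indicator mA; have mIAs := measurable_indicator mAs.
have mF := measurable_density n.
rewrite !prod_k_iter_integral !iter_integral_coupling //.
rewrite -(iter_integral_cyc_shift mu nu _
  (fun t => (\1_(cyc_shift @` A) t)%:E * _)); last 2 first.
- exact: emeasurable_funM.
- by move=> t; rewrite mule_ge0 ?density_ge0 ?indicator_ge0.
have indic_shift t : \1_(cyc_shift @` A) (cyc_shift t) = \1_A t :> R.
  by rewrite !indicE (mem_image (can_inj (cyc_shiftK n))).
under eq_fun do rewrite indic_shift.
rewrite -iter_integralZl //; last 2 first.
- exact: emeasurable_funM.
- by move=> t; rewrite mule_ge0 ?density_ge0 ?indicator_ge0.
apply: le_iter_integral => //.
- exact/emeasurable_funM/emeasurable_funM.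
- exact: emeasurable_funM.
- by move=> t; rewrite !mule_ge0 ?density_ge0 ?indicator_ge0.
- move=> t; rewrite indicE; have [/set_mem At|_] := boolP (t \in A); last first.
    by rewrite !mul0e mule0.
  rewrite !mul1e (prod_tnth_cyc_shift _ t) EFinM lee_wpmul2r ?density_ge0 //.
  by rewrite lee_fin hb.
Qed.

End cyclic_density.

Section rates.
Context {R : realType}.
Local Open Scope ereal_scope.

Lemma lne_expR_mule_le {s : R} {x y : \bar R} : 0 <= y ->
  (expR s)%:E * y <= x -> s%:E + lne y <= lne x.
Proof.
rewrite le_eqVlt => /orP[/eqP<-|y_gt0] le_x.
  by rewrite le0_lneNy // addeNy leNye.
have expRs_gt0 : 0 < (expR s)%:E by rewrite lte_fin expR_gt0.
have x_ge0 : 0 <= x by apply: le_trans le_x; rewrite mule_ge0 ?ltW.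
rewrite -[s in s%:E](expRK s) -lne_EFin ?expR_gt0 // -lneM ?in_itv /= ?leey ?andbT //.
by rewrite lee_lne ?in_itv /= ?leey ?andbT // mule_ge0 ?ltW.
Qed.

Lemma scaled_lne_le (eps r : R) (x y : \bar R) : (0 < eps)%R -> 0 <= y ->
  (expR (- (r / eps)))%:E * y <= x -> (- r)%:E + eps%:E * lne y <= eps%:E * lne x.
Proof.
move=> eps_gt0 y_ge0 /(lne_expR_mule_le y_ge0).
rewrite -(lee_pmul2l (x := eps%:E)) ?lte_fin // muleDr // -EFinM.
by rewrite mulrN mulrCA divff ?gt_eqF // mulr1.
Qed.

Lemma limf_einf_ge_addl {T : choiceType} {X : filteredType T} (F : set_system X)
    {FF : Filter F} (a : R) (f g : X -> \bar R) :
  (\forall x \near F, a%:E + g x <= f x) -> a%:E + limf_einf g F <= limf_einf f F.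
Proof.
move=> near_fg; rewrite !limf_einfE -leeBrDl //.
apply/ereal_supP => _ [V FV <-]; rewrite leeBrDl //.
have FW : F (V `&` [set x | a%:E + g x <= f x]) by exact: filterI.
apply: le_trans (ereal_sup_ubound (ex_intro2 _ _ _ FW erefl)).
apply/ereal_infP => _ [x [Vx le_fg] <-]; apply: le_trans le_fg.
by rewrite leeD2l // ereal_inf_lbound //; exists x.
Qed.

End rates.

Theorem lemma3p1 (R : realType) (TX TY : ptopologicalType)
  (polX : polish_space R TX) (polY : polish_space R TY)
  (mu : probability (borel_type TX) R) (nu : probability (borel_type TY) R)
  (c : borel_type TX * borel_type TY -> R)
  (mc : measurable_fun setT c) (c_ge0 : forall z, 0 <= c z)
  (pi : R -> probability (borel_type TX * borel_type TY)%type R)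
  (hpi : forall eps : R, 0 < eps -> cyc_invariant mu nu c eps (pi eps))
  (k : nat) (hk : (2 <= k)%N)
  (delta delta' : \bar R)
  (hd0 : (0 <= delta)%E) (hdd : (delta <= delta')%E)
  (A : set (k.-tuple (borel_type TX * borel_type TY)))
  (mA : measurable A)
  (hA : forall t, A t -> (delta <= (cyc_gap c t)%:E <= delta')%E) :
  (forall eps : R, 0 < eps ->
     (prod_k (pi eps) A <= expeR (- (delta * (eps^-1)%:E)))%E) /\
  (limf_einf (fun eps : R => (eps%:E * lne (prod_k (pi eps) (cyc_shift @` A)))%E)
       (0^'+) = 0%E ->
   (limf_einf (fun eps : R => (eps%:E * lne (prod_k (pi eps) A))%E) (0^'+)
      >= - delta')%E).
Proof.
split=> [eps eps_gt0|shifted_rate].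
  have [_ [f [mf f_gt0 pi_f f_cyc]]] := hpi eps eps_gt0.
  have f_ge0 z : 0 <= f z by exact: ltW.
  case: delta hd0 hdd hA => [r| |//] _ _ hA.
    rewrite -EFinM -EFinN /=.
    apply: (prod_k_le_cyc_gap mf f_ge0 pi_f f_cyc) => [//||t At]; first exact: expR_ge0.
    rewrite ler_expR lerN2 ler_pM2r ?invr_gt0 // -lee_fin.
    by case/andP: (hA t At).
  (* [delta = +oo]: [A] is empty. *)
  apply: (@le_trans _ _ 0%:E); last exact: expeR_ge0.
  apply: (prod_k_le_cyc_gap mf f_ge0 pi_f f_cyc) => // t At.
  by case/andP: (hA t At).
case: delta' hdd hA => [r'| |] hdd hA; last by have := le_trans hd0 hdd.
  rewrite -[leLHS]adde0 -shifted_rate; apply: limf_einf_ge_addl.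
  near=> eps; have eps_gt0 : 0 < eps by near: eps; exact: nbhs_right_gt.
  have [_ [f [mf f_gt0 pi_f f_cyc]]] := hpi eps eps_gt0.
  have f_ge0 z : 0 <= f z by exact: ltW.
  apply: scaled_lne_le => //; first exact: prod_k_ge0.
  apply: (prod_k_cyc_shift_le mf f_ge0 pi_f f_cyc) => // t At.
  rewrite ler_expR lerN2 ler_pM2r ?invr_gt0 // -lee_fin.
  by case/andP: (hA t At).
by rewrite leNye.
Unshelve. all: by end_near.
Qed.
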